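(* Consider a wormhole with two 1D boundaries, with three atomic regions $A,B,C$ on the left boundary and $A',B',C'$ on the right boundary. Let an input vector $v\in\mathbb{R}_{\ge 0}^{63}$ specify a value $S(R)$ for every nonempty subset $R\subseteq\{A,B,C,A',B',C'\}$. Let $V\subseteq\mathbb{R}_{\ge0}^{63}$ be the set of input vectors for which there exists a planar graph model. Then $V$ is not closed under convex combinations.
   Context: The boundary consists of two circles, the left one divided into the arcs $A,B,C$ in this cyclic order and the right one into $A',B',C'$. A graph model for $v$ is a finite undirected graph with nonnegative real edge weights containing six distinguished boundary vertices $v_A,\ldots,v_{C'}$ such that for every nonempty $R$, the min-cut value between the boundary vertices of the regions in $R$ and the remaining boundary vertices equals $S(R)$ (the min-cut value between two disjoint vertex sets is the minimum total weight of an edge set whose removal disconnects every vertex of the first from every vertex of the second). It is planar if it can be drawn without edge crossings on a closed annulus with $v_A,v_B,v_C$ on one boundary circle in this cyclic order and $v_{A'},v_{B'},v_{C'}$ on the other in this cyclic order. *)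

From HB Require Import structures.
From mathcomp Require Import all_boot all_order fingroup perm all_algebra.
From mathcomp Require Import reals.
Set Implicit Arguments.
Unset Strict Implicit.
Unset Printing Implicit Defensive.
Import Order.TTheory GRing.Theory Num.Theory.

(* Finite undirected multigraphs: vertex finType V, edge finType E,    *)
Section Graphs.
Variables (V E : finType) (src dst : E -> V).

Definition adj_without (F : {set E}) : rel V := fun x y =>
  [exists e, (e \notin F) &&
     (((src e == x) && (dst e == y)) || ((src e == y) && (dst e == x)))].

Definition separates (F : {set E}) (X Y : {set V}) : Prop :=
  forall x y, x \in X -> y \in Y -> ~~ connect (adj_without F) x y.

Definition is_mincut (R : realType) (w : E -> R) (X Y : {set V}) (c : R) : Prop :=
  (exists F : {set E}, separates F X Y /\ (\sum_(e in F) w e)%R = c) /\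
  (forall F : {set E}, separates F X Y -> (c <= \sum_(e in F) w e)%R).

(* darts: (e, true) leaves src e, (e, false) leaves dst e *)
Definition dart := (E * bool)%type.
Definition tail (d : dart) : V := if d.2 then src d.1 else dst d.1.
Definition flip (d : dart) : dart := (d.1, ~~ d.2).

(* s is a rotation system: it permutes the darts at each vertex in a
   single cycle (the cyclic order of darts around the vertex) *)
Definition is_rotation (s : {perm dart}) : Prop :=
  (forall d, tail (s d) = tail d) /\
  (forall d1 d2, tail d1 = tail d2 -> fconnect s d1 d2).

Definition nfaces (s : {perm dart}) : nat :=
  #|[set [set d' | fconnect (fun d => s (flip d)) d d'] | d : dart]|.
Definition nisolated : nat := #|[set v : V | [forall d : dart, tail d != v]]|.
Definition ncomp : nat := #|[set [set y | connect (adj_without set0) x y] | x : V]|.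

(* the embedding given by s is spherical (every component has genus 0):
   Euler's formula V - E + F = 2 * (#components), isolated vertices
   contributing one face each *)
Definition genus0 (s : {perm dart}) : Prop :=
  (#|V| + (nfaces s + nisolated) = #|E| + 2 * ncomp)%N.
End Graphs.

(* Boundary regions: 'I_6 with 0,1,2 = A,B,C (left circle) and         *)
(* 3,4,5 = A',B',C' (right circle).                                    *)
Definition bidx (side : bool) (i : 'I_3) : 'I_6 :=
  if side then rshift 3 i else lshift 3 i.
Definition succ3 (i : 'I_3) : 'I_3 := ordS i.

(* Annulus planarity: glue a disk to each boundary circle, i.e. add a hub
   vertex per circle joined to its three boundary vertices (spokes) and
   the rim triangle v_0 v_1 v_2; the augmented graph must be embedded in
   the sphere with the rotation around each hub being (v_0, v_1, v_2). *)
Section Annulus.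
Variables (V E : finType) (src dst : E -> V) (bnd : 'I_6 -> V).

Definition augV := (V + bool)%type.              (* inr side = hub *)
Definition augE := (E + (bool * 'I_3 * bool))%type. (* (side, i, is_rim) *)

Definition aug_src (e : augE) : augV :=
  match e with
  | inl e => inl (src e)
  | inr (s, i, rim) => if rim then inl (bnd (bidx s i)) else inr s
  end.
Definition aug_dst (e : augE) : augV :=
  match e with
  | inl e => inl (dst e)
  | inr (s, i, rim) => if rim then inl (bnd (bidx s (succ3 i)))
                       else inl (bnd (bidx s i))
  end.

Definition spoke_dart (s : bool) (i : 'I_3) : dart augE := (inr (s, i, false), true).

Definition planar_annulus : Prop :=
  exists rot : {perm dart augE},
    is_rotation aug_src aug_dst rot /\ genus0 aug_src aug_dst rot /\
    (forall s i, rot (spoke_dart s i) = spoke_dart s (succ3 i)).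
End Annulus.

Definition region_set := {Rg : {set 'I_6} | Rg != set0}.

Definition graph_model (R : realType) (v : region_set -> R)
    (V E : finType) (src dst : E -> V) (w : E -> R) (bnd : 'I_6 -> V) : Prop :=
  (forall e, (0 <= w e)%R) /\ injective bnd /\
  forall Rg : region_set,
    is_mincut src dst w (bnd @: val Rg) (bnd @: ~: val Rg) (v Rg).

Definition in_planar_set (R : realType) (v : region_set -> R) : Prop :=
  (forall Rg, (0 <= v Rg)%R) /\
  exists (V E : finType) (src dst : E -> V) (w : E -> R) (bnd : 'I_6 -> V),
    graph_model v src dst w bnd /\ planar_annulus src dst bnd.

From HB Require Import structures.
From mathcomp Require Import all_boot all_order fingroup perm all_algebra.
From mathcomp Require Import reals.
From mathcomp Require Import ring zify lra.
Import Order.TTheory GRing.Theory Num.Theory.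
Set Implicit Arguments. Unset Strict Implicit. Unset Printing Implicit Defensive.
Local Open Scope ring_scope.

(* The cut functions of the planar graphs with unit edges {AA', BB'} and {CC'}
   lie in V, but their average v does not.  In a model of v, v is positive on
   every region set separating A from A', B from B' or C from C', so the edges
   of positive weight connect each of these pairs; and v{A,A'} = v{C,C'} = 0,
   so A, B and C lie in pairwise different components.  Closed up through the
   disks glued to the two boundary circles, the paths A..A' and B'..B form a
   closed walk; as the cyclic order is A, B, C on both circles, the spokes to C
   and to C' leave it on opposite sides, so the path C..C' would have to cross
   it.  Sides are measured mod 2: in a genus-0 embedding every even subgraph is
   the boundary of a 2-colouring of the faces, because by Euler's formula the
   face boundaries span the cycle space. *)

Lemma addF2_eq0 (x y : 'F_2) : (x + y == 0) = (x == y).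
Proof. by rewrite addr_eq0 oppr_pchar2 // pchar_Fp. Qed.

Lemma addF2xx (x : 'F_2) : x + x = 0.
Proof. by apply/eqP; rewrite addF2_eq0. Qed.

Lemma sum_mul_eq (R : pzSemiRingType) (T : finType) (u : T -> R) (z : T) :
  \sum_x u x * (x == z)%:R = u z.
Proof.
by rewrite (bigD1 z) //= eqxx mulr1 big1 ?addr0 // => x /negbTE ->; rewrite mulr0.
Qed.

Lemma sum_enum_val (R : nmodType) (T : finType) (h : T -> R) :
  \sum_(i < #|T|) h (enum_val i) = \sum_x h x.
Proof. by rewrite -(big_enum_val h). Qed.

Lemma flipK (E : finType) : involutive (@flip E).
Proof. by case=> e b; rewrite /flip /= negbK. Qed.

Lemma adj_without_sym (V E : finType) (src dst : E -> V) (F : {set E}) :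
  symmetric (adj_without src dst F).
Proof.
by move=> x y; apply/existsP/existsP => -[e /andP[eF h]]; exists e; rewrite eF orbC.
Qed.

Lemma connect_adj_without_sym (V E : finType) (src dst : E -> V) (F : {set E}) :
  connect_sym (adj_without src dst F).
Proof. exact/sym_connect_sym/adj_without_sym. Qed.

Section Faces.
Variables (E : finType) (s : {perm dart E}).

Definition face_step (d : dart E) := s (flip d).
Definition face (d : dart E) := [set d' | fconnect face_step d d'].
Definition faces := [set face d | d : dart E].

Lemma face_step_inj : injective face_step.
Proof. by move=> x y /perm_inj /(can_inj (@flipK E)). Qed.

Lemma face_in_faces d : face d \in faces.
Proof. exact: imset_f. Qed.

Lemma face_step_face d : face (face_step d) = face d.
Proof. by apply/setP => d'; rewrite !inE -(same_fconnect1 face_step_inj). Qed.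

Lemma faces_face f d : f \in faces -> d \in f -> f = face d.
Proof.
case/imsetP => d0 _ -> {f}; rewrite inE => d0d; apply/setP => y; rewrite !inE.
apply/idP/idP => h; last exact: connect_trans d0d h.
by rewrite (fconnect_sym face_step_inj) in d0d; exact: connect_trans d0d h.
Qed.

Lemma mem_face_step f d : f \in faces -> (face_step d \in f) = (d \in f).
Proof. by case/imsetP => d0 _ ->; rewrite !inE -(same_fconnect1_r face_step_inj). Qed.

Lemma mem_face_flip f d : f \in faces -> (flip d \in f) = (s d \in f).
Proof. by move=> fF; rewrite -(mem_face_step _ fF) /face_step flipK. Qed.

Definition face_of (i : 'I_#|faces|) : {set dart E} := enum_val i.
Definition face_index d : 'I_#|faces| := enum_rank_in (face_in_faces d) (face d).

Lemma face_of_in_faces i : face_of i \in faces.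
Proof. exact: enum_valP. Qed.

Lemma face_of_index d : face_of (face_index d) = face d.
Proof. by rewrite /face_of /face_index enum_rankK_in // face_in_faces. Qed.

Lemma mem_face_of d i : (d \in face_of i) = (i == face_index d).
Proof.
apply/idP/eqP => [di|->]; last by rewrite face_of_index inE connect0.
apply: enum_val_inj; rewrite -/(face_of i) -/(face_of _) face_of_index.
exact: faces_face (face_of_in_faces i) di.
Qed.

Lemma face_index_step d : face_index (face_step d) = face_index d.
Proof. by apply: enum_val_inj; rewrite -!/(face_of _) !face_of_index face_step_face. Qed.

Definition face_fun (x : 'rV['F_2]_#|faces|) d := x 0 (face_index d).

Lemma sum_face_of (x : 'rV['F_2]_#|faces|) d : \sum_i x 0 i * (d \in face_of i)%:R = face_fun x d.
Proof.
rewrite (bigD1 (face_index d)) //= mem_face_of eqxx mulr1 big1 ?addr0 // => i ni.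
by rewrite mem_face_of (negbTE ni) mulr0.
Qed.

Lemma face_fun_step (x : 'rV['F_2]_#|faces|) d : face_fun x (face_step d) = face_fun x d.
Proof. by rewrite /face_fun face_index_step. Qed.

Lemma face_fun_flip (x : 'rV['F_2]_#|faces|) d : face_fun x (flip d) = face_fun x (s d).
Proof. by rewrite -face_fun_step /face_step flipK. Qed.

End Faces.

(** * The cycle space of a genus-0 embedding *)

Section Incidence.
Variables (V E : finType) (src dst : E -> V) (s : {perm dart E}).
Hypothesis rot_s : is_rotation src dst s.
Local Notation tl := (tail src dst).
Local Notation faces := (faces s).
Local Notation face_of := (@face_of _ s).
Local Notation face_fun := (@face_fun _ s).

Definition incidence_mx : 'M['F_2]_(#|V|, #|E|) := \matrix_(i, j)
  ((tl (enum_val j, true) == enum_val i)%:R + (tl (enum_val j, false) == enum_val i)%:R).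

Definition face_mx : 'M['F_2]_(#|faces|, #|E|) := \matrix_(i, j)
  (((enum_val j, true) \in face_of i)%:R + ((enum_val j, false) \in face_of i)%:R).

Definition vertex_fun (u : 'rV['F_2]_#|V|) (x : V) := u 0 (enum_rank x).

Lemma vertex_funE (u : 'rV['F_2]_#|V|) i : u 0 i = vertex_fun u (enum_val i).
Proof. by rewrite /vertex_fun enum_valK. Qed.

Lemma mul_incidence_mx (u : 'rV['F_2]_#|V|) j :
  (u *m incidence_mx) 0 j =
  vertex_fun u (src (enum_val j)) + vertex_fun u (dst (enum_val j)).
Proof.
rewrite !mxE.
transitivity (\sum_(i < #|V|)
   (vertex_fun u (enum_val i) * (enum_val i == src (enum_val j))%:R
    + vertex_fun u (enum_val i) * (enum_val i == dst (enum_val j))%:R)).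
  by apply: eq_bigr => i _; rewrite !mxE vertex_funE mulrDr /= ![_ == enum_val i]eq_sym.
rewrite big_split /= !(sum_enum_val (fun x => vertex_fun u x * (x == _)%:R)).
by rewrite !sum_mul_eq.
Qed.

Lemma mul_face_mx (x : 'rV['F_2]_#|faces|) j :
  (x *m face_mx) 0 j = face_fun x (enum_val j, true) + face_fun x (enum_val j, false).
Proof.
rewrite !mxE -!sum_face_of -big_split /=.
by apply: eq_bigr => i _; rewrite !mxE mulrDr.
Qed.

Lemma sum_tail_rot (v : V) (h : dart E -> 'F_2) :
  \sum_(d | tl d == v) h (s d) = \sum_(d | tl d == v) h d.
Proof.
rewrite [RHS](reindex_inj (@perm_inj _ s)) /=.
by apply: eq_bigl => d; rewrite rot_s.1.
Qed.

Lemma sum_tail (v : V) (h : dart E -> 'F_2) :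
  \sum_(i < #|E|) \sum_(b : bool) (tl (enum_val i, b) == v)%:R * h (enum_val i, b) =
  \sum_(d | tl d == v) h d.
Proof.
rewrite (sum_enum_val (fun e => \sum_(b : bool) (tl (e, b) == v)%:R * h (e, b))).
rewrite pair_big [RHS]big_mkcond /=.
by apply: eq_bigr => -[e b] _; case: (_ == v); rewrite ?mul1r ?mul0r.
Qed.

Lemma face_mx_cycle : face_mx *m incidence_mx^T = 0.
Proof.
apply/matrixP => i k; rewrite !mxE.
have fF : face_of i \in faces := face_of_in_faces i.
transitivity (\sum_(d | tl d == enum_val k)
    (((d \in face_of i)%:R + (flip d \in face_of i)%:R) : 'F_2)).
  rewrite -(sum_tail _ (fun d => (d \in face_of i)%:R + (flip d \in face_of i)%:R)).
  by apply: eq_bigr => j _; rewrite !mxE big_bool /= /flip /=; ring.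
rewrite big_split /=; under [X in _ + X]eq_bigr => d _ do rewrite (mem_face_flip _ fF).
by rewrite (sum_tail_rot _ (fun d => (d \in face_of i)%:R)) addF2xx.
Qed.

End Incidence.

Section Components.
Variables (V E : finType) (src dst : E -> V).
Local Notation adj := (adj_without src dst set0).
Local Notation B := (incidence_mx src dst).

Definition component x := [set y | connect adj x y].
Definition components := [set component x | x : V].

Lemma component_refl x : x \in component x.
Proof. by rewrite inE connect0. Qed.

Lemma component_eq x y : y \in component x -> component x = component y.
Proof.
rewrite inE => cxy; apply/setP => z; rewrite !inE.
apply/idP/idP => h; last exact: connect_trans cxy h.
by rewrite connect_adj_without_sym in cxy; exact: connect_trans cxy h.
Qed.

Lemma ker_incidence_connect (u : 'rV['F_2]_#|V|) x y : u *m B = 0 ->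
  connect adj x y -> vertex_fun u x = vertex_fun u y.
Proof.
move=> uB0 /connectP[p xp ->] {y}.
elim: p x xp => //= y p IH x /andP[/existsP[e /andP[_ exy]] yp].
rewrite -(IH y yp); have /rowP/(_ (enum_rank e)) := uB0.
rewrite mul_incidence_mx enum_rankK mxE => /eqP; rewrite addF2_eq0 => /eqP.
by case/orP: exy => /andP[/eqP <- /eqP <-].
Qed.

Definition component_mx : 'M['F_2]_(#|components|, #|V|) :=
  \matrix_(c, i) (enum_val i \in (enum_val c : {set V}))%:R.

Lemma ker_incidence_row (h : 'rV['F_2]_#|V|) : h *m B = 0 -> (h <= component_mx)%MS.
Proof.
move=> hB; apply/submxP; exists (\row_c
  (if [pick x | (enum_val c : {set V}) == component x] is Some x then vertex_fun h x else 0)).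
apply/rowP => i; rewrite !mxE; set z := enum_val i.
have zC : component z \in components by exact: imset_f.
pose c0 := enum_rank_in zC (component z).
have c0z : enum_val c0 = component z by rewrite enum_rankK_in.
rewrite (bigD1 c0) //= big1 ?addr0 => [|c c_c0].
  rewrite !mxE c0z component_refl mulr1 vertex_funE -/z.
  case: pickP => [x /eqP zx | /(_ z)]; last by rewrite -c0z eqxx.
  apply: ker_incidence_connect hB _.
  by have := component_refl x; rewrite -zx inE.
rewrite !mxE; case zc: (z \in (enum_val c : {set V})); last by rewrite mulr0.
case/eqP: c_c0; apply: enum_val_inj; rewrite c0z.
have /imsetP[x _ cx] := enum_valP c; rewrite cx in zc *.
by rewrite (component_eq zc).
Qed.

Lemma ker_incidence_sub : (kermx B <= component_mx)%MS.
Proof.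
by apply/row_subP => r; apply: ker_incidence_row; rewrite -row_mul mulmx_ker row0.
Qed.

Lemma rank_ker_incidence : (\rank (kermx B) <= ncomp src dst)%N.
Proof. exact: leq_trans (mxrankS ker_incidence_sub) (rank_leq_row _). Qed.

End Components.

(* A face vector with zero boundary is constant around each vertex; reading it
   off at the vertices embeds ker P into ker B, with image disjoint from the
   indicators of the isolated vertices. *)
Section FaceKernel.
Variables (V E : finType) (src dst : E -> V) (s : {perm dart E}).
Hypothesis rot_s : is_rotation src dst s.
Local Notation tl := (tail src dst).
Local Notation faces := (faces s).
Local Notation face_of := (@face_of _ s).
Local Notation face_fun := (@face_fun _ s).
Local Notation P := (face_mx s).
Local Notation B := (incidence_mx src dst).

Lemma ker_face_flip (x : 'rV['F_2]_#|faces|) d :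
  x *m P = 0 -> face_fun x (flip d) = face_fun x d.
Proof.
move=> /rowP/(_ (enum_rank d.1)); rewrite mul_face_mx enum_rankK mxE.
by move=> /eqP; rewrite addF2_eq0 => /eqP; case: d => e [] /= ->.
Qed.

Lemma ker_face_tail (x : 'rV['F_2]_#|faces|) d d' :
  x *m P = 0 -> tl d = tl d' -> face_fun x d = face_fun x d'.
Proof.
move=> xP0 /rot_s.2 /connectP[p dp ->] {d'}.
elim: p d dp => //= y p IH d /andP[/eqP <- yp].
by rewrite -(IH _ yp) -face_fun_flip ker_face_flip.
Qed.

Definition vertex_value (x : 'rV['F_2]_#|faces|) v :=
  if [pick d | tl d == v] is Some d then face_fun x d else 0.

Definition face_vertex_mx : 'M['F_2]_(#|faces|, #|V|) := \matrix_(f, i)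
  (if [pick d | tl d == enum_val i] is Some d then (d \in face_of f)%:R else 0).

Lemma mul_face_vertex_mx x i : (x *m face_vertex_mx) 0 i = vertex_value x (enum_val i).
Proof.
rewrite !mxE /vertex_value; under eq_bigr => f _ do rewrite mxE.
by case: pickP => [d _|_]; [rewrite sum_face_of | rewrite big1 // => f _; rewrite mulr0].
Qed.

Lemma vertex_value_tail x d : x *m P = 0 -> vertex_value x (tl d) = face_fun x d.
Proof.
rewrite /vertex_value => xP0; case: pickP => [d' /eqP|/(_ d)]; last by rewrite eqxx.
exact: ker_face_tail.
Qed.

Lemma ker_face_vertex (x : 'rV['F_2]_#|faces|) :
  x *m P = 0 -> (x *m face_vertex_mx) *m B = 0.
Proof.
move=> xP0; apply/rowP => j; rewrite mul_incidence_mx /vertex_fun !mul_face_vertex_mx.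
rewrite !enum_rankK -[src _]/(tl (enum_val j, true)) -[dst _]/(tl (enum_val j, false)).
by rewrite !vertex_value_tail // -mul_face_mx xP0.
Qed.

Lemma ker_face_vertex_eq0 (x : 'rV['F_2]_#|faces|) :
  x *m P = 0 -> x *m face_vertex_mx = 0 -> x = 0.
Proof.
move=> xP0 xQ0; apply/rowP => f; rewrite mxE.
have /imsetP[d0 _ fd0] := face_of_in_faces f.
have : d0 \in face_of f by rewrite fd0 inE connect0.
rewrite mem_face_of => /eqP ->; rewrite -/(face_fun x d0) -(vertex_value_tail _ xP0).
by have /rowP/(_ (enum_rank (tl d0))) := xQ0; rewrite mul_face_vertex_mx enum_rankK mxE.
Qed.

Lemma rank_ker_face_vertex : \rank (kermx P *m face_vertex_mx) = \rank (kermx P).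
Proof.
rewrite -(mxrank_mul_ker (kermx P) face_vertex_mx).
suff -> : (kermx P :&: kermx face_vertex_mx)%MS = 0 by rewrite mxrank0 addn0.
apply/eqP; rewrite -submx0; apply/row_subP => r.
have := row_sub r (kermx P :&: kermx face_vertex_mx)%MS.
rewrite sub_capmx => /andP[/sub_kermxP xP0 /sub_kermxP xQ0].
by rewrite (ker_face_vertex_eq0 xP0 xQ0) sub0mx.
Qed.

Definition isolated := [set v : V | [forall d : dart E, tl d != v]].

Definition isolated_mx : 'M['F_2]_(#|isolated|, #|V|) :=
  \matrix_(k, i) (enum_val i == (enum_val k : V))%:R.

Lemma isolated_mx_ker : isolated_mx *m B = 0.
Proof.
apply/row_matrixP => k; rewrite row_mul row0; apply/rowP => j.
rewrite mul_incidence_mx /vertex_fun !mxE !enum_rankK.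
have /[!inE] /forallP iso := enum_valP k.
by have := iso (enum_val j, true); have := iso (enum_val j, false);
  rewrite /= => /negbTE -> /negbTE ->; rewrite addr0.
Qed.

Lemma rank_isolated_mx : \rank isolated_mx = #|isolated|.
Proof.
have JJ1 : isolated_mx *m isolated_mx^T = 1%:M.
  apply/matrixP => k k'; rewrite !mxE; under eq_bigr => j _ do rewrite !mxE.
  rewrite (sum_enum_val (fun v => (v == (enum_val k : V))%:R * (v == (enum_val k' : V))%:R)).
  rewrite sum_mul_eq eq_sym; case: eqP => [/enum_val_inj -> | ne]; first by rewrite eqxx.
  by case: eqP => // kk'; case: ne; rewrite kk'.
apply/eqP; rewrite eqn_leq rank_leq_row /=.
by rewrite -{1}(mxrank1 'F_2 #|isolated|) -JJ1 mxrankM_maxl.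
Qed.

Lemma ker_face_vertex_isolated : (kermx P *m face_vertex_mx :&: isolated_mx)%MS = 0.
Proof.
apply/eqP; rewrite -submx0; apply/row_subP => r; set y := row r _.
have := row_sub r (kermx P *m face_vertex_mx :&: isolated_mx)%MS.
rewrite sub_capmx -/y => /andP[/submxP[u yu] /submxP[w yw]].
suff -> : y = 0 by rewrite sub0mx.
apply/rowP => i; rewrite [RHS]mxE.
case iso: (enum_val i \in isolated).
  rewrite yu mulmxA mxE big1 // => f _; rewrite [X in _ * X]mxE.
  case: pickP => [d /eqP td|]; last by rewrite mulr0.
  by move: iso; rewrite inE => /forallP/(_ d); rewrite td eqxx.
rewrite yw mxE big1 // => k _; rewrite mxE.
by case: eqP => [ik|]; [move: (enum_valP k); rewrite -ik iso | rewrite mulr0].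
Qed.

Lemma rank_ker_face : (\rank (kermx P) + nisolated src dst <= \rank (kermx B))%N.
Proof.
rewrite -rank_ker_face_vertex -[nisolated _ _]rank_isolated_mx.
rewrite -mxrank_disjoint_sum ?ker_face_vertex_isolated //.
apply: mxrankS; rewrite addsmx_sub; apply/andP; split; apply/sub_kermxP; last first.
  exact: isolated_mx_ker.
apply/row_matrixP => r; rewrite row0 2!row_mul; apply: ker_face_vertex.
by rewrite -row_mul mulmx_ker row0.
Qed.

End FaceKernel.

Definition cycle_mod2 (V E : finType) (src dst : E -> V) (g : E -> 'F_2) :=
  forall v, \sum_(d | tail src dst d == v) g d.1 = 0.

Definition face_invariant (E : finType) (s : {perm dart E}) (a : dart E -> 'F_2) :=
  forall d, a (s (flip d)) = a d.

Section CycleSpace.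
Variables (V E : finType) (src dst : E -> V) (s : {perm dart E}).
Hypotheses (rot_s : is_rotation src dst s) (genus0_s : genus0 src dst s).
Local Notation P := (face_mx s).
Local Notation B := (incidence_mx src dst).

(* Euler's formula V + F + I = E + 2C (I isolated vertices, C components),
   with dim ker P + I <= dim ker B <= C, gives dim ker B^T <= rank P. *)
Lemma cycle_space_face_mx : (kermx B^T <= P)%MS.
Proof.
have PK : (P <= kermx B^T)%MS by apply/sub_kermxP; exact: face_mx_cycle.
have [_ <-] := mxrank_leqif_sup PK; rewrite eqn_leq mxrankS //=.
rewrite mxrank_ker mxrank_tr.
have euler_count (nF nI nC rB rP kB kP : nat) :
    (#|V| + (nF + nI) = #|E| + 2 * nC)%N -> (rP <= nF)%N -> (rB <= #|V|)%N ->
    (kB <= nC)%N -> (kP + nI <= kB)%N -> kP = (nF - rP)%N -> kB = (#|V| - rB)%N ->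
    (#|E| - rB <= rP)%N by lia.
apply: (euler_count _ _ _ _ _ _ _ genus0_s (rank_leq_row P) (rank_leq_row B)
  (rank_ker_incidence src dst) (rank_ker_face rot_s)); exact: mxrank_ker.
Qed.

Theorem cycle_face_colouring (g : E -> 'F_2) : cycle_mod2 src dst g ->
  exists a, face_invariant s a /\ forall e, g e = a (e, true) + a (e, false).
Proof.
move=> g_cycle; set z : 'rV['F_2]_#|E| := \row_j g (enum_val j).
have zK : (z <= kermx B^T)%MS.
  apply/sub_kermxP/rowP => k; rewrite [RHS]mxE -(g_cycle (enum_val k)) mxE.
  rewrite -(sum_tail src dst _ (fun d : dart E => g d.1)).
  by apply: eq_bigr => j _; rewrite !mxE big_bool /=; ring.
have [x zx] := submxP (submx_trans zK cycle_space_face_mx).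
exists (face_fun x); split=> [d|e]; first exact: face_fun_step.
by have /rowP/(_ (enum_rank e)) := zx; rewrite mul_face_mx !mxE enum_rankK.
Qed.

End CycleSpace.

Lemma big_next (R : nmodType) (T : eqType) (W : seq T) (F : T -> R) :
  uniq W -> \sum_(u <- W) F (next W u) = \sum_(u <- W) F u.
Proof.
move=> W_uniq; rewrite -(big_map (next W) predT F); apply: perm_big.
apply: uniq_perm => //; first by rewrite map_inj_uniq //; exact: (can_inj (prev_next W_uniq)).
move=> x; apply/mapP/idP => [[y yW ->]|xW]; first by rewrite mem_next.
by exists (prev W x); rewrite ?mem_prev // next_prev.
Qed.

(** * Face colourings and closed walks *)

Section DartGraph.
Variables (V E : finType) (src dst : E -> V).

Definition dart_head (d : dart E) := tail src dst (flip d).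

Definition dart_adj : rel V :=
  fun u w => [exists d, (tail src dst d == u) && (dart_head d == w)].

End DartGraph.

Section FaceColouring.
Variables (V E : finType) (src dst : E -> V) (s : {perm dart E}).
Hypothesis rot_s : is_rotation src dst s.
Local Notation tl := (tail src dst).
Local Notation dart_head := (dart_head src dst).
Variables (g : E -> 'F_2) (a : dart E -> 'F_2).
Hypotheses (a_face : face_invariant s a) (a_bd : forall e, g e = a (e, true) + a (e, false)).

Lemma colour_flip d : a (flip d) = a (s d).
Proof. by rewrite -[in RHS](flipK d) a_face. Qed.

Lemma cycle_colour d : g d.1 = a d + a (s d).
Proof. by rewrite -colour_flip a_bd; case: d => e [] //=; rewrite addrC. Qed.

Lemma colour_rot d : g d.1 = 0 -> a (s d) = a d.
Proof. by rewrite cycle_colour => /eqP; rewrite addF2_eq0 => /eqP. Qed.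

Lemma colour_flip0 d : g d.1 = 0 -> a (flip d) = a d.
Proof. by move=> gd0; rewrite colour_flip colour_rot. Qed.

Lemma tail_iter k d : tl (iter k s d) = tl d.
Proof. by elim: k => //= k IH; rewrite rot_s.1. Qed.

Lemma colour_iter d k :
  (forall j, (j < k)%N -> g (iter j s d).1 = 0) -> a (iter k s d) = a d.
Proof.
elim: k => //= k IH g0; rewrite colour_rot ?g0 // IH // => j jk.
by rewrite g0 // ltnW.
Qed.

Lemma colour_vertex d d' :
  (forall d0, tl d0 = tl d -> g d0.1 = 0) -> tl d' = tl d -> a d' = a d.
Proof.
move=> g0 /esym /rot_s.2 /iter_findex <-.
by apply: colour_iter => j _; rewrite g0 // tail_iter.
Qed.

Lemma colour_transit p x : dart_head p = tl x ->
  (forall d, tl d = tl x -> g d.1 != 0 -> d = flip p \/ d = x) -> a p = a x.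
Proof.
move=> px only_px; set d := s (flip p).
have dx : fconnect s d x by apply: rot_s.2; rewrite rot_s.1.
have n_lt := findex_max dx; set n := findex s d x in n_lt.
(* Rotating from [d] to [x] passes no dart carrying the cycle. *)
rewrite -a_face -/d -(iter_findex dx) -/n; symmetry; apply: colour_iter => j jn.
have j_lt := ltn_trans jn n_lt.
apply/eqP; apply: contraT => /(only_px _) [|dj|djx].
- by rewrite tail_iter rot_s.1.
- have : findex s d (iter j.+1 s d) = 0%N by rewrite iterS dj findex0.
  by rewrite findex_iter // (leq_ltn_trans jn n_lt).
- by move: jn; rewrite /n -djx findex_iter // ltnn.
Qed.

Lemma colour_path x p : path (dart_adj src dst) x p ->
  {in x :: p, forall u d, tl d = u -> g d.1 = 0} ->
  forall d d', tl d = x -> tl d' = last x p -> a d' = a d.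
Proof.
elim: p x => [|y p IH] x /=.
  move=> _ g0 d d' dx d'x; apply: colour_vertex; last by rewrite d'x dx.
  by move=> d0; rewrite dx; apply: g0; rewrite mem_head.
case/andP=> /existsP[e /andP[/eqP ex /eqP ey]] yp g0 d d' dx d'y.
have g0x d0 : tl d0 = x -> g d0.1 = 0 by apply: g0; rewrite mem_head.
rewrite (IH y yp _ (flip e)) //; last by move=> u uyp; apply: g0; rewrite inE uyp orbT.
rewrite colour_flip0 ?g0x //; apply: colour_vertex => [d0|]; rewrite dx //.
exact: g0x.
Qed.

End FaceColouring.

Section ClosedWalk.
Variables (V E : finType) (src dst : E -> V) (s : {perm dart E}).
Hypothesis rot_s : is_rotation src dst s.
Local Notation tl := (tail src dst).
Local Notation dart_head := (dart_head src dst).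
Variables (W : seq V) (d0 : dart E).
Hypotheses (W_uniq : uniq W) (W_cycle : path.cycle (dart_adj src dst) W).

(* [d0] is a junk value: by [W_cycle] the pick succeeds for every [u] in [W]. *)
Definition walk_dart u := odflt d0 [pick d | (tl d == u) && (dart_head d == next W u)].

Lemma walk_dartP u : u \in W -> tl (walk_dart u) = u /\ dart_head (walk_dart u) = next W u.
Proof.
move=> uW; have /existsP[d /andP[du dn]] := next_cycle W_cycle uW.
by rewrite /walk_dart; case: pickP => [d' /andP[/eqP -> /eqP ->] //|/(_ d)]; rewrite du dn.
Qed.

Definition walk_indicator (e : E) : 'F_2 := \sum_(u <- W) (e == (walk_dart u).1)%:R.

Lemma sum_tail_edge (v : V) (e : E) :
  \sum_(d | tl d == v) ((d.1 == e)%:R : 'F_2) = (tl (e, true) == v)%:R + (tl (e, false) == v)%:R.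
Proof.
rewrite -(sum_tail src dst _ (fun d => (d.1 == e)%:R)) /=.
under eq_bigr => i _ do rewrite -mulr_suml.
rewrite (sum_enum_val (fun e' => (\sum_b (tl (e', b) == v)%:R) * (e' == e)%:R)).
by rewrite sum_mul_eq big_bool.
Qed.

Lemma walk_cycle : cycle_mod2 src dst walk_indicator.
Proof.
move=> v; rewrite /walk_indicator exchange_big /=.
transitivity (\sum_(u <- W) (((u == v)%:R : 'F_2) + (next W u == v)%:R)).
  rewrite big_seq_cond [RHS]big_seq_cond; apply: eq_bigr => u /andP[uW _].
  have [tu hu] := walk_dartP uW; rewrite sum_tail_edge.
  by case: (walk_dart u) tu hu => e [] /=; rewrite /dart_head /= => -> ->; rewrite // addrC.
by rewrite big_split /= (big_next (fun u => (u == v)%:R)) // addF2xx.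
Qed.

Lemma walk_support d : walk_indicator d.1 != 0 ->
  exists2 u, u \in W & d = walk_dart u \/ d = flip (walk_dart u).
Proof.
rewrite /walk_indicator => nz.
have /hasP[u uW /eqP du] : has (fun u => d.1 == (walk_dart u).1) W.
  apply: contraR nz => /hasPn du.
  by rewrite big1_seq // => u /andP[_ /du /negbTE ->].
exists u => //; clear nz; case: d du => e b /= ->; case: (walk_dart u) => e' b'.
by case: b; case: b'; auto.
Qed.

Lemma walk_support_at v d : v \in W -> tl d = v -> walk_indicator d.1 != 0 ->
  d = walk_dart v \/ d = flip (walk_dart (prev W v)).
Proof.
move=> vW dv /walk_support[u uW [du|du]]; have [tu hu] := walk_dartP uW.
  by left; rewrite du -tu -du dv.
have nu : next W u = v by rewrite -hu -dv du.
by right; rewrite -nu prev_next.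
Qed.

Lemma walk_support_tail d : walk_indicator d.1 != 0 -> tl d \in W.
Proof.
move=> /walk_support[u uW [->|->]]; have [tu hu] := walk_dartP uW; first by rewrite tu.
by rewrite -[tl _]/(dart_head _) hu mem_next.
Qed.

Variable a : dart E -> 'F_2.
Hypotheses (a_face : face_invariant s a)
  (a_bd : forall e, walk_indicator e = a (e, true) + a (e, false)).

Lemma walk_colour_next u : u \in W -> a (walk_dart (next W u)) = a (walk_dart u).
Proof.
move=> uW; have nW : next W u \in W by rewrite mem_next.
have [_ hu] := walk_dartP uW; have [tn _] := walk_dartP nW.
symmetry; apply: (colour_transit rot_s a_face a_bd); first by rewrite hu tn.
move=> d; rewrite tn => dn nz.
by case: (walk_support_at nW dn nz) => ->; [right | left; rewrite prev_next].
Qed.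

Lemma walk_colour_const u u' : u \in W -> u' \in W -> a (walk_dart u') = a (walk_dart u).
Proof.
move=> uW u'W; have : fconnect (next W) u u' by rewrite (fconnect_cycle (cycle_next W_uniq) uW).
move=> /iter_findex <-; elim: (findex _ u u') => //= k IH.
rewrite walk_colour_next ?IH //.
by elim: k {IH} => //= k IH; rewrite mem_next.
Qed.

End ClosedWalk.

(** * The rungs of an annulus-planar graph *)

Definition iA : 'I_3 := @Ordinal 3 0 isT.
Definition iB : 'I_3 := @Ordinal 3 1 isT.
Definition iC : 'I_3 := @Ordinal 3 2 isT.

Lemma succ3A : succ3 iA = iB. Proof. exact/val_inj. Qed.
Lemma succ3C : succ3 iC = iA. Proof. exact/val_inj. Qed.

Lemma bidx_inj s : injective (bidx s).
Proof. by case: s => i j /(congr1 val) /=; [move/addnI|]; apply: val_inj. Qed.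

Lemma connect_uniq_path (T : finType) (e : rel T) x y : connect e x y ->
  exists p, [/\ path e x p, last x p = y & uniq (x :: p)].
Proof. by case/connectP => p /shortenP[q xq uq _] ->; exists q. Qed.

Lemma prev_head (T : eqType) (x : T) p : x \notin p -> prev (x :: p) x = last x p.
Proof.
move=> xp; rewrite prev_nth mem_head /= (memNindex xp).
by rewrite -[size p]/((size (x :: p)).-1) nth_last.
Qed.

Lemma uniq_two_hubs (T : eqType) (A B : seq T) : uniq A -> uniq B ->
  (forall x, x \in A -> x \notin B) ->
  uniq (inr false :: map inl A ++ inr true :: map inl B).
Proof.
move=> uA uB AB; have inl_inj : injective (@inl T bool) by move=> ? ? [].
have inr_map c q : (@inr T bool c \in map inl q) = false by apply/mapP => -[].
rewrite /= mem_cat negb_or cat_uniq /= !map_inj_uniq // uA uB inE /= !inr_map /= !andbT.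
apply/hasPn => _ /mapP[x xB ->]; rewrite /= mem_map //.
by apply/negP => /AB; rewrite xB.
Qed.

Section Annulus.
Variables (V E : finType) (src dst : E -> V) (bnd : 'I_6 -> V) (Z : {set E}).
Hypothesis bnd_inj : injective bnd.
Local Notation asrc := (aug_src src bnd).
Local Notation adst := (aug_dst dst bnd).
Local Notation tl := (tail asrc adst).
Local Notation head := (dart_head asrc adst).
Local Notation adj := (dart_adj asrc adst).
Local Notation G := (adj_without src dst Z).
Local Notation b s i := (bnd (bidx s i)).
Local Notation spoke := (spoke_dart E).

Lemma spoke_eq d s i : tl d = inr s -> head d = inl (b s i) -> d = spoke s i.
Proof.
case: d => [[e|[[s' i'] []]] []] //=; rewrite /dart_head /flip /tail //=.
by move=> [->] [/bnd_inj /bidx_inj ->].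
Qed.

Lemma dart_adj_spoke s i : adj (inr s) (inl (b s i)).
Proof. by apply/existsP; exists (spoke s i); rewrite !eqxx. Qed.

Lemma dart_adj_spoke_flip s i : adj (inl (b s i)) (inr s).
Proof. by apply/existsP; exists (flip (spoke s i)); rewrite !eqxx. Qed.

Lemma path_adj_inl x p : path G x p -> path adj (inl x) (map inl p).
Proof.
rewrite path_map; apply: sub_path => u w /existsP[e /andP[_ /orP[]/andP[/eqP eu /eqP ew]]].
  by apply/existsP; exists (inl e, true); rewrite /dart_head /tail /= eu ew !eqxx.
by apply/existsP; exists (inl e, false); rewrite /dart_head /tail /= eu ew !eqxx.
Qed.

Variable rot : {perm dart (augE E)}.
Hypotheses (rot_rotation : is_rotation asrc adst rot) (rot_genus0 : genus0 asrc adst rot)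
  (rot_hub : forall s i, rot (spoke s i) = spoke s (succ3 i)).

Section HubWalk.
Variables (pA pB : seq V).
Hypotheses (pA_path : path G (b false iA) pA) (pA_last : last (b false iA) pA = b true iA)
  (pA_uniq : uniq (b false iA :: pA))
  (pB_path : path G (b true iB) pB) (pB_last : last (b true iB) pB = b false iB)
  (pB_uniq : uniq (b true iB :: pB))
  (pA_pB : forall x, x \in b false iA :: pA -> x \notin b true iB :: pB).

Definition hub_walk : seq (augV V) :=
  inr false :: map inl (b false iA :: pA) ++ inr true :: map inl (b true iB :: pB).

Lemma hub_walk_uniq : uniq hub_walk.
Proof. exact: uniq_two_hubs. Qed.

Lemma hub_walk_cycle : path.cycle adj hub_walk.
Proof.
rewrite /hub_walk /= rcons_cat cat_path /= dart_adj_spoke path_adj_inl //=.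
rewrite (last_map inl) pA_last dart_adj_spoke_flip dart_adj_spoke /= rcons_path.
by rewrite path_adj_inl //= (last_map inl) pB_last dart_adj_spoke_flip.
Qed.

Lemma next_hub_walk_L : next hub_walk (inr false) = inl (b false iA).
Proof. by rewrite /hub_walk /= ?eqxx. Qed.

Lemma mem_hub_walk x :
  (inl x \in hub_walk) = (x \in b false iA :: pA) || (x \in b true iB :: pB).
Proof.
have inl_inj : injective (@inl V bool) by move=> ? ? [].
by rewrite /hub_walk !(inE, mem_cat, mem_map inl_inj, inj_eq inl_inj) /= -orbA.
Qed.

Lemma hub_walk_rot :
  seq.rot (size pA).+2 hub_walk = inr true :: map inl (b true iB :: pB) ++
    inr false :: map inl (b false iA :: pA).
Proof.
have -> : (size pA).+2 = size (inr false :: map inl (b false iA :: pA)) by rewrite /= size_map.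
exact: rot_size_cat.
Qed.

Local Notation wdart := (walk_dart asrc adst hub_walk (spoke false iA)).
Local Notation windicator := (walk_indicator asrc adst hub_walk (spoke false iA)).

Lemma next_hub_walk_R : next hub_walk (inr true) = inl (b true iB).
Proof. by rewrite -(next_rot (size pA).+2 hub_walk_uniq) hub_walk_rot /= ?eqxx. Qed.

Lemma prev_hub_walk_R : prev hub_walk (inr true) = inl (b true iA).
Proof.
have := rot_uniq (size pA).+2 hub_walk; rewrite hub_walk_uniq hub_walk_rot => /andP[nR _].
rewrite -(prev_rot (size pA).+2 hub_walk_uniq) hub_walk_rot prev_head //.
by rewrite last_cat /= (last_map inl) pA_last.
Qed.

Lemma hub_walk_L : inr false \in hub_walk.
Proof. exact: mem_head. Qed.

Lemma hub_walk_R : inr true \in hub_walk.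
Proof. by rewrite /hub_walk !(inE, mem_cat) eqxx !orbT. Qed.

Lemma hub_walk_A' : inl (b true iA) \in hub_walk.
Proof. by rewrite -prev_hub_walk_R mem_prev hub_walk_R. Qed.

Lemma walk_dart_L : wdart (inr false) = spoke false iA.
Proof.
have [tL hL] := walk_dartP (spoke false iA) hub_walk_cycle hub_walk_L.
by apply: spoke_eq; rewrite // hL next_hub_walk_L.
Qed.

Lemma walk_dart_R : wdart (inr true) = spoke true iB.
Proof.
have [tR hR] := walk_dartP (spoke false iA) hub_walk_cycle hub_walk_R.
by apply: spoke_eq; rewrite // hR next_hub_walk_R.
Qed.

Lemma walk_dart_A' : wdart (inl (b true iA)) = flip (spoke true iA).
Proof.
have [tA hA] := walk_dartP (spoke false iA) hub_walk_cycle hub_walk_A'.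
rewrite -[wdart _]flipK; congr flip; apply: spoke_eq; last by rewrite /dart_head flipK.
by rewrite -[tl _]/(head _) hA -prev_hub_walk_R next_prev // hub_walk_uniq.
Qed.

Lemma walk_indicator_spoke : windicator (spoke true iA).1 = 1.
Proof.
rewrite /walk_indicator (bigD1_seq _ hub_walk_A' hub_walk_uniq) /= walk_dart_A' eqxx.
rewrite big1_seq ?addr0 // => u /andP[uA' uW].
have [tu _] := walk_dartP (spoke false iA) hub_walk_cycle uW.
case Eu: (wdart u) tu => [e []] tu; case: eqP => //= eA; rewrite -{}eA /tail /= in Eu tu.
  by move: walk_dart_R; rewrite tu Eu => -[].
by move: uA'; rewrite -tu eqxx.
Qed.

(* The spoke to C precedes the spoke to A around both hubs.  The walk leaves the
   left hub along the spoke to A, but enters the right hub along the spoke to A'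
   and leaves it along the spoke to B', so the two C spokes lie on opposite
   sides of it. *)
Lemma hub_walk_separates (a : dart (augE E) -> 'F_2) : face_invariant rot a ->
  (forall e, windicator e = a (e, true) + a (e, false)) ->
  a (flip (spoke true iC)) != a (flip (spoke false iC)).
Proof.
move=> a_face a_bd; have := cycle_colour a_face a_bd (spoke true iA).
rewrite walk_indicator_spoke rot_hub succ3A -walk_dart_R.
rewrite (walk_colour_const rot_rotation hub_walk_uniq hub_walk_cycle a_face a_bd
  hub_walk_L hub_walk_R).
rewrite walk_dart_L !(colour_flip a_face) !rot_hub succ3C => one.
by rewrite -addF2_eq0 -one oner_eq0.
Qed.

Lemma hub_walk_meets pC : path G (b false iC) pC -> last (b false iC) pC = b true iC ->
  has (fun x => inl x \in hub_walk) (b false iC :: pC).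
Proof.
move=> pC_path pC_last; apply: contraT => /hasPn pC_off.
have [a [a_face a_bd]] := cycle_face_colouring rot_rotation rot_genus0
  (walk_cycle (spoke false iA) hub_walk_uniq hub_walk_cycle).
case/negP: (hub_walk_separates a_face a_bd); apply/eqP.
apply: (colour_path rot_rotation a_face a_bd (path_adj_inl pC_path)) => //.
- rewrite -map_cons => _ /mapP[x /pC_off x_off ->] d dx; apply/eqP.
  by apply: contraNT x_off => /(walk_support_tail hub_walk_cycle); rewrite dx.
- by rewrite (last_map inl) pC_last.
Qed.

End HubWalk.

Theorem annulus_rungs :
  connect G (b false iA) (b true iA) -> connect G (b false iB) (b true iB) ->
  connect G (b false iC) (b true iC) ->
  [|| connect G (b false iA) (b false iB), connect G (b false iA) (b false iC)
    | connect G (b false iC) (b false iB)].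
Proof.
move=> cA cB cC; apply: contraT => /norP[nAB /norP[nAC nCB]].
have G_sym := connect_adj_without_sym src dst Z.
have [pA [pA_path pA_last pA_uniq]] := connect_uniq_path cA.
have [pB [pB_path pB_last pB_uniq]] : exists p, [/\ path G (b true iB) p,
    last (b true iB) p = b false iB & uniq (b true iB :: p)].
  by apply: connect_uniq_path; rewrite G_sym.
have [pC [pC_path pC_last _]] := connect_uniq_path cC.
have connA x : x \in b false iA :: pA -> connect G (b false iA) x.
  by apply: path_connect.
have connB x : x \in b true iB :: pB -> connect G (b false iB) x.
  by move=> xB; have := path_connect pB_path xB; apply: connect_trans.
have pA_pB x : x \in b false iA :: pA -> x \notin b true iB :: pB.
  by move=> /connA Ax; apply: contra nAB => /connB Bx; rewrite (connect_trans Ax) // G_sym.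
have /hasP[x xC] := hub_walk_meets pA_path pA_last pA_uniq pB_path pB_last pB_uniq pA_pB
  pC_path pC_last.
have Cx := path_connect pC_path xC.
rewrite mem_hub_walk => /orP[/connA Ax|/connB Bx].
  by move: nAC; rewrite (connect_trans Ax) // G_sym.
by move: nCB; rewrite (connect_trans Cx) // G_sym.
Qed.

End Annulus.

(** * Cut functions and graph models *)

Section UnitCuts.
Variables (R : realType) (V E : finType) (src dst : E -> V).
Local Notation adj := (adj_without src dst).

Definition crossing (S : {set V}) := [set e | (src e \in S) != (dst e \in S)].

Lemma path_avoiding_crossing S x p : path (adj (crossing S)) x p -> (last x p \in S) = (x \in S).
Proof.
elim: p x => //= y p IH x /andP[/existsP[e /andP[eS exy]] yp].
rewrite IH //; move: eS; rewrite inE negbK => /eqP.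
by case/orP: exy => /andP[/eqP -> /eqP ->].
Qed.

Lemma mincut_crossing S : is_mincut src dst (fun _ => 1 : R) S (~: S) #|crossing S|%:R.
Proof.
split=> [|F sep].
  exists (crossing S); split=> [x y xS yS|]; last by rewrite sumr_const.
  apply/negP => /connectP[p xp yl].
  by move: yS; rewrite inE yl path_avoiding_crossing // xS.
rewrite sumr_const ler_nat; apply/subset_leq_card/subsetP => e; rewrite inE => e_cross.
apply: contraT => eF; have e_adj : adj F (src e) (dst e).
  by apply/existsP; exists e; rewrite eF !eqxx.
case sS: (src e \in S) e_cross => e_cross.
  have dS : dst e \in ~: S by rewrite inE; case: (dst e \in S) e_cross.
  by move: (sep _ _ sS dS); rewrite (connect1 e_adj).
have dS : dst e \in S by case: (dst e \in S) e_cross.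
have sS' : src e \in ~: S by rewrite inE sS.
by move: (sep _ _ dS sS'); rewrite connect_adj_without_sym (connect1 e_adj).
Qed.

End UnitCuts.

Definition cut_fun (R : realType) (E : finType) (src dst : E -> 'I_6) (Rg : region_set) : R :=
  #|crossing src dst (val Rg)|%:R.

Lemma graph_model_cut_fun (R : realType) (E : finType) (src dst : E -> 'I_6) :
  graph_model (cut_fun R src dst) src dst (fun _ => 1) id.
Proof.
split=> [_|]; first exact: ler01.
by split=> [x y //|Rg]; rewrite !imset_id; exact: mincut_crossing.
Qed.

Section ModelConnectivity.
Variables (R : realType) (v : region_set -> R) (V E : finType) (src dst : E -> V).
Variables (w : E -> R) (bnd : 'I_6 -> V).
Hypothesis model : graph_model v src dst w bnd.
Local Notation G := (adj_without src dst [set e | w e == 0]).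

Lemma model_zero_disconnect (Rg : region_set) x y :
  v Rg = 0 -> x \in val Rg -> y \notin val Rg -> ~~ connect G (bnd x) (bnd y).
Proof.
move=> v0 xR yR; have [[F [sep wF]] _] := model.2.2 Rg.
have F0 e : e \in F -> w e = 0.
  by move=> eF; apply: (psumr_eq0P (fun i _ => model.1 i)) eF; rewrite wF v0.
apply/negP => xy; have : connect (adj_without src dst F) (bnd x) (bnd y).
  apply: connect_sub xy => a1 a2 /existsP[e /andP[eZ h]]; apply/connect1/existsP.
  by exists e; rewrite h andbT; apply: contra eZ => eF; rewrite inE F0.
by apply/negP/sep; [exact: imset_f | apply: imset_f; rewrite inE].
Qed.

Lemma model_pos_connect i j :
  (forall Rg : region_set, i \in val Rg -> j \notin val Rg -> 0 < v Rg) ->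
  connect G (bnd i) (bnd j).
Proof.
move=> pos; apply: contraT => nij.
pose S := [set k | connect G (bnd i) (bnd k)].
have iS : i \in S by rewrite inE connect0.
have S0 : S != set0 by apply/set0Pn; exists i.
have sep : separates src dst [set e | w e == 0] (bnd @: S) (bnd @: ~: S).
  move=> _ _ /imsetP[k1 k1S ->] /imsetP[k2 k2S ->]; move: k1S k2S; rewrite !inE => k1S.
  by apply: contra; exact: connect_trans k1S.
have [_ /(_ _ sep)] := model.2.2 (exist _ S S0).
rewrite big1 => [|e]; last by rewrite inE => /eqP.
by rewrite leNgt pos // inE.
Qed.

End ModelConnectivity.

Lemma card_connect_classes (T : finType) (e : rel T) (k : nat) (cls : T -> nat) (rep : nat -> T) :
  connect_sym e -> (forall x y, e x y -> cls x = cls y) ->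
  (forall x, connect e (rep (cls x)) x) ->
  (forall i, (i < k)%N -> cls (rep i) = i) -> (forall x, (cls x < k)%N) ->
  #|[set [set y | connect e x y] | x : T]| = k.
Proof.
move=> e_sym cls_e rep_cls cls_rep cls_lt.
have cls_connect x y : connect e x y -> cls x = cls y.
  move=> /connectP[p xp ->] {y}; elim: p x xp => //= y p IH x /andP[exy yp].
  by rewrite (cls_e _ _ exy) IH.
have class_eq x y : connect e x y -> [set z | connect e x z] = [set z | connect e y z].
  move=> xy; apply/setP => z; rewrite !inE; apply/idP/idP; last exact: connect_trans.
  by apply: connect_trans; rewrite e_sym.
have -> : [set [set y | connect e x y] | x : T] =
          [set [set y | connect e (rep i) y] | i : 'I_k].
  apply/setP => S; apply/imsetP/imsetP => [[x _ ->]|[i _ ->]]; last by exists (rep i).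
  by exists (Ordinal (cls_lt x)) => //=; apply: class_eq; rewrite e_sym.
rewrite card_imset ?card_ord // => i j /= eq_ij; apply/val_inj.
have : rep j \in [set y | connect e (rep i) y] by rewrite eq_ij inE connect0.
by rewrite inE => /cls_connect; rewrite !cls_rep.
Qed.

Lemma uniq_map_inj (T T' : eqType) (f : T -> T') s : uniq (map f s) -> {in s &, injective f}.
Proof.
elim: s => //= z s IH /andP[fz fs] x y; rewrite !inE.
case/predU1P => [->|xs] /predU1P[->|ys] // fxy; last exact: IH.
- by move: fz; rewrite fxy map_f.
- by move: fz; rewrite -fxy map_f.
Qed.

Lemma traject_fconnect (T : finType) (f : T -> T) x y n : y \in traject f x n -> fconnect f x y.
Proof. by case/trajectP => i _ ->; exact: fconnect_iter. Qed.

Lemma bidx_surj (x : 'I_6) : exists s i, bidx s i = x.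
Proof.
exists (3 <= x)%N, (inord (x %% 3)); apply: val_inj.
by case: x => [[|[|[|[|[|[|//]]]]]] x6]; rewrite /= inordK.
Qed.

(* Cardinalities and enumerations of finite types are locked and do not reduce,
   so every check below runs over an explicit list [ds] of all darts. *)
Section PlanarCertificate.
Variables (E : finType) (src dst : E -> 'I_6).
Local Notation asrc := (aug_src src id).
Local Notation adst := (aug_dst dst id).
Local Notation tl := (tail asrc adst).
Variables (f : dart (augE E) -> dart (augE E)) (ds reps : seq (dart (augE E))).
Local Notation n := (size ds).

Definition face_class d := find (fun r => d \in traject (fun d => f (flip d)) r n) reps.

Hypotheses (ds_all : forall d, d \in ds) (f_uniq : uniq (map f ds))
  (f_tail : all (fun d => tl (f d) == tl d) ds)
  (f_vertex : all (fun d => all (fun d' => (tl d == tl d') ==> (d' \in traject f d n)) ds) ds)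
  (face_class_lt : all (fun d => face_class d < size reps)%N ds)
  (face_class_rep : all (fun i => face_class (nth (spoke_dart E false iA) reps i) == i)
     (iota 0 (size reps)))
  (face_class_step : all (fun d => face_class (f (flip d)) == face_class d) ds)
  (f_hub : forall s i, f (spoke_dart E s i) = spoke_dart E s (succ3 i))
  (connected : forall x, connect (adj_without asrc adst set0) (inr false) x)
  (* Euler's formula for the connected augmented graph: 8 vertices, #|E| + 12 edges *)
  (euler : (8 + size reps = #|E| + 14)%N).

Lemma cert_inj : injective f.
Proof. by move=> x y; apply: (uniq_map_inj f_uniq); exact: ds_all. Qed.

Definition cert_rot : {perm dart (augE E)} := perm cert_inj.

Lemma cert_rotE d : cert_rot d = f d.
Proof. exact: permE. Qed.

Lemma cert_rotation : is_rotation asrc adst cert_rot.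
Proof.
split=> [d|d1 d2 d12]; first by rewrite cert_rotE; apply/eqP/(allP f_tail d (ds_all d)).
rewrite (eq_connect (e' := frel f)) => [|x y]; last by rewrite /= cert_rotE.
apply: (@traject_fconnect _ _ _ _ n).
by have /allP/(_ d2 (ds_all _)) := allP f_vertex d1 (ds_all _); rewrite d12 eqxx.
Qed.

Lemma cert_nfaces : nfaces cert_rot = size reps.
Proof.
apply: card_connect_classes => [x y|x y /eqP <-|x|i|x].
- exact/fconnect_sym/face_step_inj.
- by rewrite cert_rotE; apply/esym/eqP/(allP face_class_step x (ds_all x)).
- rewrite (eq_connect (e' := frel (fun d => f (flip d)))) => [|u w]; last by rewrite /= cert_rotE.
  have has_x : has (fun r => x \in traject (fun d => f (flip d)) r n) reps.
    by rewrite has_find; exact: (allP face_class_lt x (ds_all x)).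
  exact: traject_fconnect (nth_find (spoke_dart E false iA) has_x).
- by move=> i_lt; apply/eqP/(allP face_class_rep); rewrite mem_iota.
- exact: (allP face_class_lt x (ds_all x)).
Qed.

Lemma cert_nisolated : nisolated asrc adst = 0%N.
Proof.
apply/eqP; rewrite cards_eq0; apply/eqP/setP => v; rewrite !inE.
apply/negbTE/negP => /forallP iso; case: v iso => [x|s] iso.
  have [s [i si]] := bidx_surj x.
  by have := iso (inr (s, i, true), true); rewrite /tail /= si eqxx.
by have := iso (spoke_dart E s iA); rewrite /tail /= eqxx.
Qed.

Lemma cert_ncomp : ncomp asrc adst = 1%N.
Proof.
apply: (card_connect_classes (cls := fun=> 0%N) (rep := fun=> inr false)) => //.
- exact: connect_adj_without_sym.
- by case.
Qed.

Lemma cert_planar : planar_annulus src dst id.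
Proof.
exists cert_rot; split; first exact: cert_rotation.
split=> [|s i]; last by rewrite cert_rotE f_hub.
rewrite /genus0 cert_nfaces cert_nisolated cert_ncomp.
by rewrite !card_sum !card_prod !card_bool !card_ord; move: euler; lia.
Qed.

End PlanarCertificate.

Lemma aug_connected (E : finType) (src dst : E -> 'I_6) (e : E) i j :
  src e = bidx false i -> dst e = bidx true j ->
  forall x, connect (adj_without (aug_src src id) (aug_dst dst id) set0) (inr false) x.
Proof.
move=> e_src e_dst; set adj := adj_without _ _ _.
have spoke s k : adj (inr s) (inl (bidx s k)).
  by apply/existsP; exists (inr (s, k, false)); rewrite inE !eqxx.
have LR : connect adj (inr false) (inr true).
  apply: connect_trans (connect1 (spoke false i)) _.
  apply: connect_trans (connect1 (_ : adj _ (inl (bidx true j)))) _.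
    by apply/existsP; exists (inl e); rewrite inE /= e_src e_dst !eqxx.
  by apply: connect1; rewrite /adj adj_without_sym.
case=> [x|[]]; [|exact: LR|exact: connect0].
have [[] [k <-]] := bidx_surj x; last exact: connect1.
exact: connect_trans LR (connect1 (spoke true k)).
Qed.

Lemma bidx_sides i j : (bidx false i == bidx true j) = false.
Proof. by apply/negbTE/eqP => /(congr1 val) /= ij; have := ltn_ord i; rewrite ij; lia. Qed.

Lemma rung_region_neq0 i : [set bidx false i; bidx true i] != set0.
Proof. by apply/set0Pn; exists (bidx false i); rewrite !inE eqxx. Qed.

Definition rung_region i : region_set :=
  exist _ [set bidx false i; bidx true i] (rung_region_neq0 i).

Definition disk_edges : seq (bool * 'I_3 * bool) :=
  [seq (si, r) | si <- [seq (s, i) | s <- [:: false; true], i <- [:: iA; iB; iC]],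
                 r <- [:: false; true]].

Definition orbit_reps (T : eqType) (g : T -> T) (k : nat) (xs : seq T) : seq T :=
  foldl (fun reps x => if has (fun r => x \in traject g r k) reps then reps else rcons reps x)
    [::] xs.

Section Rungs.
Variables (E : finType) (pos : E -> 'I_3) (es : seq E).
Hypothesis es_all : forall e, e \in es.

Definition rung_src (e : E) : 'I_6 := bidx false (pos e).
Definition rung_dst (e : E) : 'I_6 := bidx true (pos e).

(* Around the boundary vertex [bidx s i] the darts come in the order: its rung
   (if any), the rim edge to [bidx s (succ3 i)], the spoke, the rim edge from
   the predecessor. *)
Definition rung_rot (d : dart (augE E)) : dart (augE E) :=
  match d with
  | (inl e, b) => (inr (~~ b, pos e, true), true)
  | (inr (s, i, false), true) => (inr (s, succ3 i, false), true)
  | (inr (s, i, true), true) => (inr (s, i, false), false)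
  | (inr (s, i, false), false) => (inr (s, succ3 (succ3 i), true), false)
  | (inr (s, i, true), false) =>
      if [seq e <- es | pos e == succ3 i] is e :: _ then (inl e, ~~ s)
      else (inr (s, succ3 i, true), true)
  end.

Definition rung_darts : seq (dart (augE E)) :=
  [seq (x, b) | x <- map inl es ++ map inr disk_edges, b <- [:: true; false]].

Lemma mem_rung_darts d : d \in rung_darts.
Proof.
case: d => x b; apply: allpairs_f; last by case: b.
rewrite mem_cat; case: x => [e|[[s i] r]]; first by rewrite map_f.
apply/orP; right; rewrite mem_map; last by move=> ? ? [].
apply: allpairs_f; last by case: r.
by apply: allpairs_f; [case: s | case: i => [[|[|[|]]]]].
Qed.

Local Notation tl := (tail (aug_src rung_src id) (aug_dst rung_dst id)).
Local Notation n := (size rung_darts).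
Definition rung_certificate : bool :=
  let reps := orbit_reps (fun d => rung_rot (flip d)) n rung_darts in
  [&& uniq (map rung_rot rung_darts),
      all (fun d => tl (rung_rot d) == tl d) rung_darts,
      all (fun d => all (fun d' => (tl d == tl d') ==> (d' \in traject rung_rot d n))
        rung_darts) rung_darts,
      all (fun d => face_class rung_rot rung_darts reps d < size reps)%N rung_darts,
      all (fun i => face_class rung_rot rung_darts reps (nth (spoke_dart _ false iA) reps i) == i)
        (iota 0 (size reps)),
      all (fun d => face_class rung_rot rung_darts reps (rung_rot (flip d)) ==
        face_class rung_rot rung_darts reps d) rung_darts,
      uniq es
    & 8 + size reps == size es + 14]%N.

Lemma rung_planar (e0 : E) : rung_certificate -> planar_annulus rung_src rung_dst id.
Proof.
case/and5P => f_uniq f_tail f_vertex cls_lt /and4P[cls_rep cls_step es_uniq /eqP euler].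
have card_es : #|E| = size es.
  rewrite cardE; apply/perm_size/uniq_perm => [||e]; rewrite ?enum_uniq ?mem_enum ?es_all //.
apply: cert_planar mem_rung_darts f_uniq f_tail f_vertex cls_lt cls_rep cls_step _ _ _ => //.
- exact: (@aug_connected _ _ _ e0 _ _ erefl erefl).
- by rewrite card_es.
Qed.

Lemma rung_cut_gt0 (R : realType) e (Rg : region_set) :
  bidx false (pos e) \in val Rg -> bidx true (pos e) \notin val Rg ->
  0 < cut_fun R rung_src rung_dst Rg.
Proof.
move=> in_Rg out_Rg; rewrite ltr0n card_gt0; apply/set0Pn; exists e.
by rewrite inE /rung_src /rung_dst in_Rg (negbTE out_Rg).
Qed.

Lemma rung_cut_region (R : realType) i : cut_fun R rung_src rung_dst (rung_region i) = 0.
Proof.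
rewrite /cut_fun /= (_ : crossing _ _ _ = set0) ?cards0 //.
apply/setP => e; rewrite !inE /rung_src /rung_dst !(inj_eq (@bidx_inj _)).
rewrite -[rshift 3 i]/(bidx true i) -[lshift 3 i]/(bidx false i) [bidx true _ == _]eq_sym.
by rewrite !bidx_sides orbF eqxx.
Qed.

Lemma rungs_in_planar_set (R : realType) (e0 : E) :
  rung_certificate -> in_planar_set (cut_fun R rung_src rung_dst).
Proof.
move=> cert; split=> [Rg|]; first exact: ler0n.
exists 'I_6, E, rung_src, rung_dst, (fun=> 1), id.
split; first exact: graph_model_cut_fun.
exact: rung_planar e0 cert.
Qed.

End Rungs.

Lemma planar_rung_region_neq0 (R : realType) (v : region_set -> R) : in_planar_set v ->
  (forall i (Rg : region_set), bidx false i \in val Rg -> bidx true i \notin val Rg -> 0 < v Rg) ->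
  v (rung_region iA) = 0 -> v (rung_region iC) != 0.
Proof.
case=> _ [V [E [src [dst [w [bnd [model [rot [rot_rotation [rot_genus0 rot_hub]]]]]]]]]] pos vA0.
apply/eqP => vC0.
have := annulus_rungs model.2.1 rot_rotation rot_genus0 rot_hub
  (model_pos_connect model (pos iA)) (model_pos_connect model (pos iB))
  (model_pos_connect model (pos iC)).
case/or3P; apply/negP.
- by apply: (model_zero_disconnect model vA0); rewrite !inE.
- by apply: (model_zero_disconnect model vA0); rewrite !inE.
- by apply: (model_zero_disconnect model vC0); rewrite !inE.
Qed.

Lemma ord3_cases (i : 'I_3) : [\/ i = iA, i = iB | i = iC].
Proof.
by case: i => -[|[|[|//]]] i3; [constructor 1|constructor 2|constructor 3]; apply: val_inj.
Qed.

Definition rungsAB (b : bool) : 'I_3 := if b then iB else iA.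
Definition rungC (u : unit) : 'I_3 := iC.

Lemma rungsAB_certificate : rung_certificate rungsAB [:: false; true].
Proof. by vm_compute. Qed.

Lemma rungC_certificate : rung_certificate rungC [:: tt].
Proof. by vm_compute. Qed.

Lemma rungsAB_planar (R : realType) :
  in_planar_set (cut_fun R (rung_src rungsAB) (rung_dst rungsAB)).
Proof. by apply: (@rungs_in_planar_set _ _ _ _ R false rungsAB_certificate); case. Qed.

Lemma rungC_planar (R : realType) :
  in_planar_set (cut_fun R (rung_src rungC) (rung_dst rungC)).
Proof. by apply: (@rungs_in_planar_set _ _ _ _ R tt rungC_certificate); case. Qed.

Lemma convex_comb_gt0 (R : realFieldType) (t x y : R) : 0 < t < 1 -> 0 <= x -> 0 <= y ->
  (0 < x) || (0 < y) -> 0 < t * x + (1 - t) * y.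
Proof.
move=> /andP[t0]; rewrite -subr_gt0 => t1 x0 y0 /orP[] xy_pos.
  by have := mulr_gt0 t0 xy_pos; have := mulr_ge0 (ltW t1) y0; lra.
by have := mulr_ge0 (ltW t0) x0; have := mulr_gt0 t1 xy_pos; lra.
Qed.

Section Mix.
Variables (R : realType) (t : R).
Hypothesis t01 : 0 < t < 1.
Local Notation vAB := (cut_fun R (rung_src rungsAB) (rung_dst rungsAB)).
Local Notation vC := (cut_fun R (rung_src rungC) (rung_dst rungC)).

Lemma rung_mix_gt0 i (Rg : region_set) : bidx false i \in val Rg -> bidx true i \notin val Rg ->
  0 < t * vAB Rg + (1 - t) * vC Rg.
Proof.
move=> in_Rg out_Rg; apply: convex_comb_gt0; rewrite ?ler0n //.
case: (ord3_cases i) in_Rg out_Rg => -> in_Rg out_Rg.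
- by rewrite (@rung_cut_gt0 _ _ _ false).
- by rewrite (@rung_cut_gt0 _ _ _ true).
- by rewrite orbC (@rung_cut_gt0 _ _ _ tt).
Qed.

Lemma rung_mix_region i : t * vAB (rung_region i) + (1 - t) * vC (rung_region i) = 0.
Proof. by rewrite !rung_cut_region !mulr0 addr0. Qed.

End Mix.

Theorem theorem3 (R : realType) :
  ~ (forall (v1 v2 : region_set -> R) (t : R),
       in_planar_set v1 -> in_planar_set v2 -> 0 <= t -> t <= 1 ->
       in_planar_set (fun Rg => t * v1 Rg + (1 - t) * v2 Rg)).
Proof.
move=> convex; pose t : R := 2^-1.
have t01 : 0 < t < 1 by rewrite invr_gt0 invf_lt1 ?ltr0n ?ltr1n.
have /andP[t_gt0 t_lt1] := t01.
have := convex _ _ t (rungsAB_planar R) (rungC_planar R) (ltW t_gt0) (ltW t_lt1).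
move=> /planar_rung_region_neq0 /(_ (rung_mix_gt0 t01) (rung_mix_region t iA)).
by rewrite rung_mix_region eqxx.
Qed.
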